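(* Let $q=1-p=o\!\left(\frac{1}{n^{1.5}}\right)$. Then for all sufficiently large $n\in\mathbb{N}$ we have $u_2(n,p)=u_2'(n,p)=3$.
   Context: $G(n,p)$ is the Erdős–Rényi random graph on $n$ labelled vertices (vertex set $V$), each edge present independently with probability $p=p(n)$; $\mathbb{P}_{n,p}$ is the corresponding probability and $q=1-p$. A diameter graph in $\mathbb{R}^d$ is a graph $(V,E)$ with $V\subset\mathbb{R}^d$ finite and $E=\{\{\mathbf{x},\mathbf{y}\}\subseteq V: |\mathbf{x}-\mathbf{y}|=\operatorname{diam}V\}$, where $\operatorname{diam}V=\max_{\mathbf{x},\mathbf{y}\in V}|\mathbf{x}-\mathbf{y}|$ (Euclidean norm); a graph is a diameter graph in $\mathbb{R}^d$ if it is isomorphic to one. $u_d(n,p)$ is the largest positive integer $k$ such that $\mathbb{P}_{n,p}\big(\exists W\subseteq V,\ |W|=k,\ G[W]$ is a diameter graph in $\mathbb{R}^d$ and $\chi(G[W])=d+1\big)>\frac12$, where $G[W]$ is the induced subgraph; if no such $k$ exists, $u_d(n,p)=0$. $u_d'(n,p)$ is defined identically with the additional requirement that $G[W]$ be connected. *)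

From Stdlib Require Import Reals ClassicalEpsilon.
From mathcomp Require Import all_boot.
Set Implicit Arguments. Unset Strict Implicit. Unset Printing Implicit Defensive.

(* A graph on 'I_n is its edge set: a set of 2-element subsets of 'I_n. *)
Definition pairs (n : nat) : {set {set 'I_n}} := [set e : {set 'I_n} | #|e| == 2].
Definition graphs (n : nat) : {set {set {set 'I_n}}} := powerset (pairs n).

Definition adj (n : nat) (E : {set {set 'I_n}}) (x y : 'I_n) : bool :=
  (x != y) && ([set x; y] \in E).

Definition gnp_weight (n : nat) (p : R) (E : {set {set 'I_n}}) : R :=
  Rmult (pow p #|E|) (pow (Rminus 1 p) ('C(n, 2) - #|E|)).

Definition gnp_prob (n : nat) (p : R) (A : {set {set 'I_n}} -> Prop) : R :=
  \big[Rplus/R0]_(E in graphs n)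
     (if excluded_middle_informative (A E) then gnp_weight p E else R0).

Definition eucl_dist (d : nat) (x y : 'I_d -> R) : R :=
  sqrt (\big[Rplus/R0]_(i < d) (pow (Rminus (x i) (y i)) 2)).

(* G[W] is a diameter graph in R^d: there is an injective placement f of W in R^d
   (an isomorphism of G[W] onto (f(W), E')) such that for distinct x,y in W,
   {x,y} is an edge iff |f x - f y| = diam f(W), i.e. iff |f x - f y| is at least
   every distance |f u - f v| with u,v in W. *)
Definition is_diameter_graph (d n : nat) (E : {set {set 'I_n}}) (W : {set 'I_n}) : Prop :=
  exists f : 'I_n -> ('I_d -> R),
    {in W &, injective f} /\
    forall x y, x \in W -> y \in W -> x != y ->
      (adj E x y <->
       forall u v, u \in W -> v \in W -> Rle (eucl_dist (f u) (f v)) (eucl_dist (f x) (f y))).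

Definition colorable (n : nat) (E : {set {set 'I_n}}) (W : {set 'I_n}) (k : nat) : bool :=
  [exists c : {ffun 'I_n -> 'I_k},
     [forall x in W, forall y in W, adj E x y ==> (c x != c y)]].

Definition chromatic_number_is (n : nat) (E : {set {set 'I_n}}) (W : {set 'I_n}) (k : nat) : Prop :=
  colorable E W k /\ forall j, (j < k)%N -> ~~ colorable E W j.

Definition induced_connected (n : nat) (E : {set {set 'I_n}}) (W : {set 'I_n}) : bool :=
  [forall x in W, forall y in W,
     connect (fun a b => [&& a \in W, b \in W & adj E a b]) x y].

Definition diam_event (d : nat) (conn : bool) (n k : nat) (E : {set {set 'I_n}}) : Prop :=
  exists W : {set 'I_n},
    #|W| = k /\ is_diameter_graph d E W /\ chromatic_number_is E W d.+1 /\
    (conn -> induced_connected E W).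

Definition u_value (d : nat) (conn : bool) (n : nat) (p : R) (k : nat) : Prop :=
  let good := fun j : nat => Rgt (gnp_prob p (@diam_event d conn n j)) (Rinv (IZR 2)) in
  ((0 < k)%N /\ good k /\ forall j, (k < j)%N -> ~ good j) \/
  (k = 0 /\ forall j, (0 < j)%N -> ~ good j).

Definition u_eq (d n : nat) (p : R) (k : nat) : Prop := u_value d false n p k.
Definition u'_eq (d n : nat) (p : R) (k : nat) : Prop := u_value d true n p k.

From Stdlib Require Import Reals Lra Psatz Classical ClassicalEpsilon FunctionalExtensionality.
From HB Require Import structures.
From mathcomp Require Import all_boot zify.
Set Implicit Arguments. Unset Strict Implicit. Unset Printing Implicit Defensive.

(** The lower bound: with probability at least [p^3 > 1/2] the vertices
    [0, 1, 2] span a triangle, which is a diameter graph in the plane (an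
    equilateral triangle) of chromatic number 3.

    The upper bound: with probability at least [1 - n^3 q^2 > 1/2] every vertex
    has at most one non-neighbour.  In such a graph a planar diameter graph
    [G[W]] with [|W| >= 4] is bipartite: a planar diameter graph contains no
    diamond (two equilateral triangles on a common side have apexes at distance
    [sqrt 3] times that side, exceeding the diameter), and with all but a
    matching of edges present, a triangle together with any fourth vertex of
    [W] forms a diamond; so the neighbours of any vertex [a] of [W] form one
    colour class. *)

Local Open Scope R_scope.

HB.instance Definition _ := Monoid.isComLaw.Build R R0 Rplus
  (fun x y z => esym (Rplus_assoc x y z)) Rplus_comm Rplus_0_l.
HB.instance Definition _ := Monoid.isComLaw.Build R R1 Rmult
  (fun x y z => esym (Rmult_assoc x y z)) Rmult_comm Rmult_1_l.
HB.instance Definition _ := Monoid.isMulLaw.Build R R0 Rmult Rmult_0_l Rmult_0_r.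
HB.instance Definition _ :=
  Monoid.isAddLaw.Build R Rmult Rplus Rmult_plus_distr_r Rmult_plus_distr_l.

Section RealBigops.

Variable I : finType.

Lemma Rprod_const (A : {pred I}) x : \big[Rmult/R1]_(i in A) x = x ^ #|A|.
Proof. by rewrite big_const; elim: #|A| => //= k ->. Qed.

Lemma Rsum_const x : \big[Rplus/R0]_(i : I) x = INR #|I| * x.
Proof.
by rewrite big_const; elim: #|I| => [|k IH]; rewrite ?iterS ?IH ?S_INR /=; lra.
Qed.

Lemma Rprod_eq0 (F : I -> R) i : F i = 0 -> \big[Rmult/R1]_j F j = 0.
Proof. by move=> Fi0; rewrite (bigD1 i) //= Fi0 Rmult_0_l. Qed.

Lemma Rsum_le (P : pred I) (F G : I -> R) :
  (forall i, P i -> F i <= G i) ->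
  \big[Rplus/R0]_(i | P i) F i <= \big[Rplus/R0]_(i | P i) G i.
Proof. by move=> FG; apply: (big_ind2 Rle) => // *; lra. Qed.

Lemma Rsum_ge0 (P : pred I) (F : I -> R) :
  (forall i, P i -> 0 <= F i) -> 0 <= \big[Rplus/R0]_(i | P i) F i.
Proof. by move=> F0; apply: (big_ind (Rle 0)) => // *; lra. Qed.

Lemma Rsum_ge_term (F : I -> R) i :
  (forall j, 0 <= F j) -> F i <= \big[Rplus/R0]_j F j.
Proof.
move=> F0; rewrite (bigD1 i) //=.
have := @Rsum_ge0 (fun j => j != i) F (fun j _ => F0 j); lra.
Qed.

End RealBigops.

Lemma if_informative_true (P : Prop) (a b : R) :
  P -> (if excluded_middle_informative P then a else b) = a.
Proof. by case: excluded_middle_informative. Qed.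

Lemma if_informative_false (P : Prop) (a b : R) :
  ~ P -> (if excluded_middle_informative P then a else b) = b.
Proof. by case: excluded_middle_informative. Qed.

Section RandomGraph.

Variables (n : nat) (p : R).
Hypothesis p01 : 0 <= p <= 1.

Lemma card_pairs : #|pairs n| = 'C(n, 2).
Proof. by rewrite /pairs card_draws card_ord. Qed.

Lemma pair_in_pairs (x y : 'I_n) : x != y -> [set x; y] \in pairs n.
Proof. by move=> xy; rewrite inE cards2 xy. Qed.

Lemma gnp_weight_ge0 (E : {set {set 'I_n}}) : 0 <= gnp_weight p E.
Proof. by apply: Rmult_le_pos; apply: pow_le; lra. Qed.

Lemma gnp_weight_prod (E : {set {set 'I_n}}) : E \subset pairs n ->
  gnp_weight p E = \big[Rmult/R1]_(e in pairs n) (if e \in E then p else 1 - p).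
Proof.
move=> Epairs; rewrite (bigID (mem E)) /=.
rewrite (eq_bigr (fun _ => p)); last by move=> e /andP[_ ->].
rewrite [X in _ * X](eq_bigr (fun _ => 1 - p)); last by move=> e /andP[_ /negbTE ->].
rewrite !Rprod_const /gnp_weight; congr (_ ^ _ * _ ^ _).
  by apply: eq_card => e; rewrite [RHS]unfold_in /= andb_idl // => /(subsetP Epairs).
rewrite -card_pairs -(setIidPr Epairs) -cardsD.
apply: eq_card => e; rewrite [RHS]unfold_in /= in_setD in_setI.
by case: (e \in pairs n); rewrite /= ?andbT ?andbF.
Qed.

Lemma gnp_term_ge0 (C : Prop) (E : {set {set 'I_n}}) :
  0 <= if excluded_middle_informative C then gnp_weight p E else 0.
Proof.
by case: excluded_middle_informative => ?; [exact: gnp_weight_ge0 | exact: Rle_refl].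
Qed.

Lemma gnp_prob_le (A B : {set {set 'I_n}} -> Prop) :
  (forall E, E \in graphs n -> A E -> B E) -> gnp_prob p A <= gnp_prob p B.
Proof.
move=> AB; apply: Rsum_le => E gE.
have [AE|nAE] := classic (A E).
  by rewrite !if_informative_true //; [lra | exact: AB].
by rewrite if_informative_false //; apply: gnp_term_ge0.
Qed.

Lemma gnp_prob_eq0 (A : {set {set 'I_n}} -> Prop) :
  (forall E, E \in graphs n -> ~ A E) -> gnp_prob p A = 0.
Proof. by move=> nA; rewrite /gnp_prob big1 // => E gE; apply/if_informative_false/nA. Qed.

Lemma gnp_prob_ext (A B : {set {set 'I_n}} -> Prop) :
  (forall E, A E <-> B E) -> gnp_prob p A = gnp_prob p B.
Proof.
move=> AB; apply: eq_bigr => E _.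
case: excluded_middle_informative => [AE|nAE]; case: excluded_middle_informative => //=.
  by case; apply/AB.
by move=> /AB.
Qed.

Lemma gnp_prob_union_bound (K : finType) (A : {set {set 'I_n}} -> Prop)
    (B : K -> {set {set 'I_n}} -> Prop) :
  (forall E, E \in graphs n -> A E -> exists k, B k E) ->
  gnp_prob p A <= \big[Rplus/R0]_k gnp_prob p (B k).
Proof.
move=> AB; rewrite /gnp_prob exchange_big /=; apply: Rsum_le => E gE.
have [AE|nAE] := classic (A E); last first.
  by rewrite if_informative_false //; apply: Rsum_ge0 => k _; apply: gnp_term_ge0.
have [k BkE] := AB E gE AE.
apply: Rle_trans (Rsum_ge_term k (fun k => gnp_term_ge0 _ _)).
by rewrite !if_informative_true //; exact: Rle_refl.
Qed.

Section ContainAvoid.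

Variables S T : {set {set 'I_n}}.
Hypotheses (Spairs : S \subset pairs n) (Tpairs : T \subset pairs n).
Hypothesis ST : [disjoint S & T].

(* [F e] and [G e] are the weights of the pair [e] being present, resp. absent,
   in a graph of the event (a non-pair is always absent); [bigA_distr] turns
   [prod_e (F e + G e)] into the sum of the weights of all graphs in the event. *)
Let F (e : {set 'I_n}) := if (e \in pairs n) && (e \notin T) then p else 0.
Let G (e : {set 'I_n}) := if e \in pairs n then (if e \in S then 0 else 1 - p) else 1.

Let expand_factor (J : {set {set 'I_n}}) :
  \big[Rmult/R1]_e (if e \in J then F e else G e) =
  if J \in graphs n then
    if excluded_middle_informative (S \subset J /\ [disjoint T & J])
    then gnp_weight p J else 0
  else 0.
Proof.
have [Jpairs|] := boolP (J \subset pairs n); last first.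
  move=> /[dup] nJpairs /subsetPn[e eJ epairs].
  rewrite /graphs powersetE (negbTE nJpairs).
  by rewrite (Rprod_eq0 (i := e)) // eJ /F (negbTE epairs).
rewrite /graphs powersetE Jpairs.
case: excluded_middle_informative => [[SJ TJ]|bad] /=.
  rewrite (gnp_weight_prod Jpairs) [RHS]big_mkcond /=; apply: eq_bigr => e _.
  rewrite /F /G; case: ifP => eJ; first by rewrite (subsetP Jpairs) ?(disjointFl TJ).
  by case: ifP => // _; case: ifP => // eS; move: eJ; rewrite (subsetP SJ).
have [SJ|] := boolP (S \subset J); last first.
  case/subsetPn=> e eS eJ.
  by rewrite (Rprod_eq0 (i := e)) // (negbTE eJ) /G (subsetP Spairs) ?eS.
have : ~~ [disjoint T & J] by apply/negP => TJ; apply: bad.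
rewrite disjoint_subset => /subsetPn[e eT]; rewrite inE negbK => eJ.
by rewrite (Rprod_eq0 (i := e)) // eJ /F (subsetP Tpairs) ?eT.
Qed.

Lemma gnp_prob_contain_avoid :
  gnp_prob p (fun E => S \subset E /\ [disjoint T & E]) = p ^ #|S| * (1 - p) ^ #|T|.
Proof.
have factor e : F e + G e = (if e \in S then p else 1) * (if e \in T then 1 - p else 1).
  rewrite /F /G; case: (boolP (e \in S)) => eS; case: (boolP (e \in T)) => eT.
  - by rewrite (disjointFr ST eS) in eT.
  - by rewrite (subsetP Spairs) //=; lra.
  - by rewrite (subsetP Tpairs) //=; lra.
  - by case: (e \in pairs n) => /=; lra.
transitivity (\big[Rmult/R1]_e (F e + G e)); last first.
  by under eq_bigr do rewrite factor; rewrite big_split -!big_mkcond !Rprod_const.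
rewrite bigA_distr /gnp_prob big_mkcond.
by apply: eq_big => // J; rewrite expand_factor.
Qed.

End ContainAvoid.

Lemma gnp_prob_contain (S : {set {set 'I_n}}) :
  S \subset pairs n -> gnp_prob p (fun E => S \subset E) = p ^ #|S|.
Proof.
move=> Spairs; have S0 : [disjoint S & set0] by rewrite -setI_eq0 setI0.
have := gnp_prob_contain_avoid Spairs (sub0set _) S0; rewrite cards0 Rmult_1_r => <-.
by apply: gnp_prob_ext => E; split=> [SE|[]//]; split; rewrite // -setI_eq0 set0I.
Qed.

Lemma gnp_prob_avoid (T : {set {set 'I_n}}) :
  T \subset pairs n -> gnp_prob p (fun E => [disjoint T & E]) = (1 - p) ^ #|T|.
Proof.
move=> Tpairs; have T0 : [disjoint set0 & T] by rewrite -setI_eq0 set0I.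
have := gnp_prob_contain_avoid (sub0set _) Tpairs T0; rewrite cards0 Rmult_1_l => <-.
by apply: gnp_prob_ext => E; split=> [TE|[]//]; split; first exact: sub0set.
Qed.

End RandomGraph.

Lemma eucl_dist_xx d (x : 'I_d -> R) : eucl_dist x x = 0.
Proof. by rewrite /eucl_dist big1 ?sqrt_0 // => i _; rewrite Rminus_diag; ring. Qed.

Definition sqdist2 (x y : 'I_2 -> R) : R :=
  (x ord0 - y ord0) ^ 2 + (x (lift ord0 ord0) - y (lift ord0 ord0)) ^ 2.

Lemma eucl_dist2E (x y : 'I_2 -> R) : eucl_dist x y = sqrt (sqdist2 x y).
Proof. by rewrite /eucl_dist !big_ord_recl big_ord0 /sqdist2 Rplus_0_r. Qed.

Lemma sqdist2_ge0 (x y : 'I_2 -> R) : 0 <= sqdist2 x y.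
Proof. by apply: Rplus_le_le_0_compat; apply: pow2_ge_0. Qed.

Lemma sqdist2C (x y : 'I_2 -> R) : sqdist2 x y = sqdist2 y x.
Proof. by rewrite /sqdist2; ring. Qed.

Lemma eucl_dist2_le (u v x y : 'I_2 -> R) :
  eucl_dist u v <= eucl_dist x y -> sqdist2 u v <= sqdist2 x y.
Proof. by rewrite !eucl_dist2E; apply: sqrt_le_0; apply: sqdist2_ge0. Qed.

Lemma point2_ext (x y : 'I_2 -> R) :
  x ord0 = y ord0 -> x (lift ord0 ord0) = y (lift ord0 ord0) -> x = y.
Proof.
move=> x0 x1; apply: functional_extensionality => -[[|[|//]] i2].
  by rewrite (_ : Ordinal i2 = ord0) //; apply: val_inj.
by rewrite (_ : Ordinal i2 = lift ord0 ord0) //; apply: val_inj.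
Qed.

(* The apexes [c], [d] of equilateral triangles on the segment [0 a] satisfy
   [a.(c - d) = 0] and [(c + d).(c - d) = 0]; in the plane, if [c <> d] this
   makes [c + d] parallel to [a], so [c + d = a] and [|c - d|^2 = 3 s]. *)
Lemma close_equilateral_apexes_coord (ax ay cx cy dx dy s : R) :
  ax ^ 2 + ay ^ 2 = s -> cx ^ 2 + cy ^ 2 = s -> dx ^ 2 + dy ^ 2 = s ->
  (ax - cx) ^ 2 + (ay - cy) ^ 2 = s -> (ax - dx) ^ 2 + (ay - dy) ^ 2 = s ->
  (cx - dx) ^ 2 + (cy - dy) ^ 2 <= s -> cx = dx /\ cy = dy.
Proof.
move=> a2 c2 d2 ac2 ad2 cd2.
set wx := cx - dx; set wy := cy - dy; set bx := cx + dx; set by_ := cy + dy.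
set W := wx ^ 2 + wy ^ 2; set B := bx ^ 2 + by_ ^ 2; set K := ax * by_ - ay * bx.
have aw : ax * wx + ay * wy = 0 by rewrite /wx /wy; nra.
have ab : ax * bx + ay * by_ = s by rewrite /bx /by_; nra.
have bw : bx * wx + by_ * wy = 0 by rewrite /bx /by_ /wx /wy; nra.
have KW : K ^ 2 * W = 0.
  have -> : K ^ 2 * W = ((ax * wx + ay * wy) * bx - (bx * wx + by_ * wy) * ax) ^ 2
                      + ((ax * wx + ay * wy) * by_ - (bx * wx + by_ * wy) * ay) ^ 2.
    by rewrite /K /W; ring.
  by rewrite aw bw; ring.
have sB : s * B = s ^ 2 + K ^ 2.
  by rewrite -{1}a2 -ab /B /K; ring.
have WB : W + B = 4 * s by rewrite /W /B /wx /wy /bx /by_; nra.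
have W0 : W = 0.
  have W_ge0 : 0 <= W by rewrite /W; nra.
  have Ws : W <= s := cd2.
  have s_ge0 : 0 <= s by rewrite -a2; nra.
  case: (Req_dec K 0) => K0; last first.
    apply: (Rmult_eq_reg_l (K ^ 2)); last exact: pow_nonzero.
    by rewrite KW Rmult_0_r.
  have sW : s * W = 3 * s ^ 2 by rewrite K0 in sB; nra.
  have s0 : s = 0 by nra.
  lra.
have [wx0 wy0] : wx = 0 /\ wy = 0 by rewrite /W in W0; split; nra.
by split; apply: Rminus_diag_uniq.
Qed.

Lemma close_equilateral_apexes_eq (o a c d : 'I_2 -> R) :
  sqdist2 o c = sqdist2 o a -> sqdist2 o d = sqdist2 o a ->
  sqdist2 a c = sqdist2 o a -> sqdist2 a d = sqdist2 o a ->
  sqdist2 c d <= sqdist2 o a -> c = d.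
Proof.
rewrite /sqdist2; set o1 := lift ord0 ord0 => oc od ac ad cd.
have [c0 c1] : c ord0 - o ord0 = d ord0 - o ord0 /\ c o1 - o o1 = d o1 - o o1.
  by apply: (@close_equilateral_apexes_coord (a ord0 - o ord0) (a o1 - o o1)
    _ _ _ _ ((o ord0 - a ord0) ^ 2 + (o o1 - a o1) ^ 2)); nra.
by apply: point2_ext; rewrite -/o1; lra.
Qed.

Section Diamonds.

Variables (n : nat) (E : {set {set 'I_n}}) (W : {set 'I_n}).

Lemma adjC (x y : 'I_n) : adj E x y = adj E y x.
Proof. by rewrite /adj eq_sym setUC. Qed.

Lemma adj_neq (x y : 'I_n) : adj E x y -> x != y.
Proof. by case/andP. Qed.

(* A diamond is [K_4] minus the edge [z w]. *)
Definition diamond_free : Prop :=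
  forall x y z w, x \in W -> y \in W -> z \in W -> w \in W -> z != w ->
  adj E x y -> adj E x z -> adj E x w -> adj E y z -> adj E y w -> False.

Lemma planar_diameter_graph_diamond_free :
  is_diameter_graph 2 E W -> diamond_free.
Proof.
case=> f [f_inj diamf] x y z w xW yW zW wW zw xy xz xw yz yw.
have longest u v : adj E u v -> u \in W -> v \in W ->
    forall u' v', u' \in W -> v' \in W -> sqdist2 (f u') (f v') <= sqdist2 (f u) (f v).
  move=> uv uW vW u' v' u'W v'W; apply: eucl_dist2_le.
  exact: (diamf u v uW vW (adj_neq uv)).1 uv u' v' u'W v'W.
have side u v : adj E u v -> u \in W -> v \in W ->
    sqdist2 (f u) (f v) = sqdist2 (f x) (f y).
  by move=> uv uW vW; apply: Rle_antisym; [apply: longest | apply: (longest u v)].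
suff fzw : f z = f w by move: zw; rewrite (f_inj z w zW wW fzw) eqxx.
by apply: (@close_equilateral_apexes_eq (f x) (f y)); [apply: side..|apply: longest].
Qed.

End Diamonds.

Section CompleteGraphs.

Variables (n : nat) (E : {set {set 'I_n}}) (W : {set 'I_n}).
Hypothesis W_complete : forall x y, x \in W -> y \in W -> x != y -> adj E x y.

Lemma complete_diameter_graph d (f : 'I_n -> 'I_d -> R) r :
  {in W &, injective f} ->
  (forall x y, x \in W -> y \in W -> x != y -> eucl_dist (f x) (f y) = r) ->
  is_diameter_graph d E W.
Proof.
move=> f_inj equidist; exists f; split=> // x y xW yW xy.
split=> [_ u v uW vW|_]; last exact: W_complete.
rewrite (equidist x y) //; have [<-|uv] := eqVneq u v.
  by rewrite eucl_dist_xx -(equidist x y) //; apply: sqrt_pos.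
by rewrite equidist //; apply: Rle_refl.
Qed.

Lemma complete_chromatic_number k : #|W| = k.+1 -> chromatic_number_is E W k.+1.
Proof.
move=> cardW; split.
  apply/existsP; exists [ffun x => inord (index x (enum W))].
  apply/forallP => x; apply/implyP => xW; apply/forallP => y; apply/implyP => yW.
  apply/implyP => /adj_neq; apply: contra => /eqP; rewrite !ffunE => /(congr1 val).
  have index_lt v : v \in W -> (index v (enum W) < k.+1)%N.
    by rewrite -cardW cardE index_mem mem_enum.
  rewrite /= !inordK ?index_lt // => ixy; apply/eqP.
  by apply: (@index_inj _ x (enum W)); rewrite ?mem_enum.
move=> j jk; apply/existsP => -[c /forallP c_proper].
have c_inj : {in W &, injective c}.
  move=> x y xW yW; apply: contra_eq => xy.
  move: (c_proper x); rewrite xW /= => /forallP/(_ y); rewrite yW /= => /implyP; apply.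
  exact: W_complete.
have := max_card [set c x | x in W]; rewrite card_in_imset // cardW card_ord.
by rewrite leqNgt jk.
Qed.

Lemma complete_induced_connected : induced_connected E W.
Proof.
apply/forallP => x; apply/implyP => xW; apply/forallP => y; apply/implyP => yW.
have [<-|xy] := eqVneq x y; first exact: connect0.
by apply: connect1; rewrite xW yW W_complete.
Qed.

End CompleteGraphs.

Lemma in_set3_pairwise (T : finType) (P : T -> T -> Prop) (x y z : T) :
  (forall u v, P u v -> P v u) -> P x y -> P x z -> P y z ->
  forall u v, u \in [set x; y; z] -> v \in [set x; y; z] -> u != v -> P u v.
Proof.
move=> P_sym xy xz yz u v; rewrite !inE.
by move=> /orP[/orP[]|]/eqP-> /orP[/orP[]|]/eqP->; rewrite ?eqxx //; auto.
Qed.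

Lemma card_set3_le (T : finType) (x y z : T) : (#|[set x; y; z]| <= 3)%N.
Proof. by rewrite -setUA cardsU1 cards2; case: (_ \notin _); case: (_ != _). Qed.

Definition point2 (a b : R) : 'I_2 -> R := fun i => if i == ord0 then a else b.

Lemma triangle_diam_event n conn (E : {set {set 'I_n}}) (x y z : 'I_n) :
  x != y -> x != z -> y != z ->
  [set x; y] \in E -> [set x; z] \in E -> [set y; z] \in E ->
  diam_event 2 conn 3 E.
Proof.
move=> xy xz yz Exy Exz Eyz; set W := [set x; y; z].
have W_complete : forall u v, u \in W -> v \in W -> u != v -> adj E u v.
  apply: in_set3_pairwise => [u v|||]; first by rewrite adjC.
  - by rewrite /adj xy Exy.
  - by rewrite /adj xz Exz.
  - by rewrite /adj yz Eyz.
have cardW : #|W| = 3%N.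
  by rewrite /W -setUA cardsU1 cards2 yz !inE negb_or xy xz.
pose f v :=
  if v == x then point2 0 0 else if v == y then point2 1 0 else point2 (/2) (sqrt 3 / 2).
have fx : f x = point2 0 0 by rewrite /f eqxx.
have fy : f y = point2 1 0 by rewrite /f eqxx eq_sym (negbTE xy).
have fz : f z = point2 (/2) (sqrt 3 / 2) by rewrite /f eq_sym (negbTE xz) eq_sym (negbTE yz).
have unit_sides : forall u v, u \in W -> v \in W -> u != v -> sqdist2 (f u) (f v) = 1.
  have sqrt3 := sqrt_sqrt 3 ltac:(lra).
  apply: in_set3_pairwise => [u v|||]; first by rewrite sqdist2C.
  - by rewrite /= fx fy /sqdist2 /point2 /=; lra.
  - by rewrite /= fx fz /sqdist2 /point2 /=; lra.
  - by rewrite /= fy fz /sqdist2 /point2 /=; lra.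
exists W; split=> //; split; last split.
- apply: (@complete_diameter_graph _ _ _ W_complete _ f 1).
    move=> u v uW vW fuv; apply/eqP; apply: contraT => uv.
    by have := unit_sides u v uW vW uv; rewrite fuv /sqdist2; lra.
  by move=> u v uW vW uv; rewrite eucl_dist2E unit_sides ?sqrt_1.
- exact: complete_chromatic_number.
- by move=> _; apply: complete_induced_connected.
Qed.

Section NonNeighbours.

Variables (n : nat) (E : {set {set 'I_n}}) (W : {set 'I_n}).

Definition at_most_one_non_neighbour : Prop :=
  forall v x y : 'I_n, v != x -> v != y -> x != y -> adj E v x || adj E v y.

Hypotheses (E_dense : at_most_one_non_neighbour) (W_diamond_free : diamond_free E W).

Lemma triangle_extension_false a x y w :
  a \in W -> x \in W -> y \in W -> w \in W -> w \notin [set a; x; y] ->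
  adj E a x -> adj E a y -> adj E x y -> False.
Proof.
move=> aW xW yW wW; rewrite !inE !negb_or => /andP[/andP[w_a w_x] w_y] ax ay xy.
have [wa|not_wa] := boolP (adj E w a).
  have /orP[wx|wy] := E_dense w_x w_y (adj_neq xy).
    by apply: (W_diamond_free aW xW yW wW); rewrite // 1?eq_sym 1?adjC.
  by apply: (W_diamond_free aW yW xW wW); rewrite // 1?eq_sym 1?adjC.
have /orP[|wx] := E_dense w_a w_x (adj_neq ax); first by rewrite (negbTE not_wa).
have /orP[|wy] := E_dense w_a w_y (adj_neq ay); first by rewrite (negbTE not_wa).
by apply: (W_diamond_free xW yW aW wW); rewrite // 1?eq_sym 1?adjC.
Qed.

Lemma diamond_free_bipartite : (3 < #|W|)%N -> colorable E W 2.
Proof.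
move=> W_gt3; have [a aW] : exists a, a \in W by apply/card_gt0P; lia.
apply/existsP; exists [ffun v => if adj E a v then ord_max else ord0].
apply/forallP => x; apply/implyP => xW; apply/forallP => y; apply/implyP => yW.
apply/implyP => xy; rewrite !ffunE; case: ifP => ax; case: ifP => ay //; exfalso.
  have [w wW wS] : exists2 w, w \in W & w \notin [set a; x; y].
    apply/subsetPn; apply: contraL W_gt3 => /subset_leq_card W_le.
    by rewrite -leqNgt (leq_trans W_le) ?card_set3_le.
  exact: (triangle_extension_false aW xW yW wW wS).
have a_x : a != x by apply/eqP => ea; move: ay; rewrite ea xy.
have a_y : a != y by apply/eqP => ea; move: ax; rewrite ea adjC xy.
by move: (E_dense a_x a_y (adj_neq xy)); rewrite ax ay.
Qed.

End NonNeighbours.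

Lemma planar_diameter_chromatic3_card_le3 n (E : {set {set 'I_n}}) (W : {set 'I_n}) :
  at_most_one_non_neighbour E -> is_diameter_graph 2 E W ->
  chromatic_number_is E W 3 -> (#|W| <= 3)%N.
Proof.
move=> E_dense W_diam [_ not_2colorable]; rewrite leqNgt; apply/negP => W_gt3.
move: (not_2colorable 2%N isT); apply/negP/negPn.
exact: diamond_free_bipartite (planar_diameter_graph_diamond_free W_diam) W_gt3.
Qed.

Lemma pow_le_pow_le1 (x : R) (m k : nat) : 0 <= x <= 1 -> (m <= k)%N -> x ^ k <= x ^ m.
Proof.
move=> x01 mk; rewrite -(subnK mk) pow_add.
have := pow_incr x 1 (k - m) x01; rewrite pow1 => xkm.
have := pow_le x m (proj1 x01); nra.
Qed.

Section Bounds.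

Variables (n : nat) (p : R).
Hypothesis p01 : 0 <= p <= 1.

Lemma gnp_prob_diam_event3_ge conn :
  (3 <= n)%N -> p ^ 3 <= gnp_prob p (@diam_event 2 conn n 3).
Proof.
move=> n3; pose x := @Ordinal n 0 (leq_trans (isT : (1 <= 3)%N) n3).
pose y := @Ordinal n 1 (leq_trans (isT : (2 <= 3)%N) n3); pose z := @Ordinal n 2 n3.
have xy : x != y by []. have xz : x != z by []. have yz : y != z by [].
pose S := [set [set x; y]; [set x; z]; [set y; z]].
have Spairs : S \subset pairs n.
  by apply/subsetP => e /setUP[/set2P[]|/set1P]->; apply: pair_in_pairs.
apply: Rle_trans (pow_le_pow_le1 p01 (card_set3_le [set x; y] [set x; z] [set y; z])) _.
rewrite -(gnp_prob_contain p Spairs); apply: gnp_prob_le => // E _ SE.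
by apply: (triangle_diam_event conn xy xz yz); apply: (subsetP SE); rewrite !inE eqxx ?orbT.
Qed.

Lemma gnp_prob_two_non_neighbours_le :
  gnp_prob p (fun E : {set {set 'I_n}} => ~ at_most_one_non_neighbour E)
    <= INR n ^ 3 * (1 - p) ^ 2.
Proof.
pose distinct (k : 'I_n * 'I_n * 'I_n) := [&& k.1.1 != k.1.2, k.1.1 != k.2 & k.1.2 != k.2].
pose T (k : 'I_n * 'I_n * 'I_n) := [set [set k.1.1; k.1.2]; [set k.1.1; k.2]].
pose B k (E : {set {set 'I_n}}) := distinct k /\ [disjoint T k & E].
apply: Rle_trans (gnp_prob_union_bound p01 (B := B) _) _.
  move=> E _ not_dense; apply: NNPP => noB; apply: not_dense => v x y vx vy xy.
  apply/negPn/negP; rewrite /adj vx vy /= => /norP[vx_E vy_E].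
  apply: noB; exists (v, x, y); split; first by rewrite /distinct /= vx vy xy.
  by rewrite disjoint_subset; apply/subsetP => e /set2P[]->; rewrite inE.
apply: Rle_trans (Rsum_le (G := fun _ => (1 - p) ^ 2) _) _.
  move=> k _; have [k_distinct|k_not_distinct] := boolP (distinct k); last first.
    rewrite gnp_prob_eq0; first by apply: pow_le; lra.
    by move=> E _ [k_distinct]; rewrite k_distinct in k_not_distinct.
  case: k k_distinct => [[v x] y] /and3P[/= vx vy xy].
  have Tpairs : T (v, x, y) \subset pairs n.
    by apply/subsetP => e /set2P[]->; apply: pair_in_pairs.
  have cardT : #|T (v, x, y)| = 2%N.
    rewrite /T cards2; suff -> : [set v; x] != [set v; y] by [].
    apply/eqP => /setP/(_ y).
    by rewrite !inE eqxx orbT (eq_sym y v) (negbTE vy) (eq_sym y x) (negbTE xy).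
  change (gnp_prob p (B (v, x, y)) <= (1 - p) ^ 2); rewrite -cardT -(gnp_prob_avoid p Tpairs).
  by apply: gnp_prob_le => // E _ [].
rewrite Rsum_const !card_prod card_ord !mult_INR; apply: Req_le; ring.
Qed.

Lemma gnp_prob_diam_event_gt3_le conn j : (3 < j)%N ->
  gnp_prob p (@diam_event 2 conn n j) <= INR n ^ 3 * (1 - p) ^ 2.
Proof.
move=> j_gt3; apply: Rle_trans gnp_prob_two_non_neighbours_le.
apply: gnp_prob_le => // E _ [W [cardW [W_diam [W_chi _]]]] E_dense.
have := planar_diameter_chromatic3_card_le3 E_dense W_diam W_chi.
by rewrite cardW leqNgt j_gt3.
Qed.

End Bounds.

Lemma u_value_of_bounds d conn n p k : (0 < k)%N ->
  / 2 < gnp_prob p (@diam_event d conn n k) ->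
  (forall j, (k < j)%N -> gnp_prob p (@diam_event d conn n j) <= / 2) ->
  u_value d conn n p k.
Proof. by move=> k_gt0 good bad; left; do 2!split => //; move=> j /bad; rewrite /Rgt; lra. Qed.

Lemma eventually_nearly_complete (p : nat -> R) :
  (forall n, 0 <= p n <= 1) ->
  Un_cv (fun n => (1 - p n) * (INR n * sqrt (INR n))) 0 ->
  exists N, forall n, (N <= n)%N ->
    [/\ (3 <= n)%N, INR n ^ 3 * (1 - p n) ^ 2 < / 2 & / 2 < p n ^ 3].
Proof.
move=> p01 q_small; have [N qN] := q_small (/ 2) ltac:(lra).
exists (maxn N 3) => n; rewrite geq_max => /andP[nN n3].
have := qN n (elimT leP nN); rewrite /R_dist Rminus_0_r.
have [p0 p1] := p01 n; set q := 1 - p n; set x := INR n => q_x.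
have x3 : 3 <= x.
  have : INR 3 <= x by apply/le_INR/leP.
  by rewrite /=; lra.
have sqrt_x1 : 1 <= sqrt x by rewrite -sqrt_1; apply: sqrt_le_1_alt; lra.
have sqrt_xx : sqrt x * sqrt x = x by apply: sqrt_sqrt; lra.
have qx_ge0 : 0 <= q * (x * sqrt x) by apply: Rmult_le_pos; rewrite /q; nra.
have qx_lt : q * (x * sqrt x) < / 2 by rewrite Rabs_right in q_x => //; apply: Rle_ge.
split=> //.
  have -> : x ^ 3 * q ^ 2 = (q * (x * sqrt x)) ^ 2.
    have -> : (q * (x * sqrt x)) ^ 2 = q ^ 2 * x ^ 2 * (sqrt x * sqrt x) by ring.
    by rewrite sqrt_xx; ring.
  nra.
have q_le : q <= / 6.
  have q_ge0 : 0 <= q by rewrite /q; lra.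
  have : q * 3 <= q * (x * sqrt x) by apply: Rmult_le_compat_l => //; nra.
  lra.
have : (5 / 6) ^ 3 <= p n ^ 3 by apply: pow_incr; rewrite /q in q_le; lra.
rewrite /=; lra.
Qed.

Unset Implicit Arguments.

Theorem theorem14 (p : nat -> R) (hp : forall n, Rle R0 (p n) /\ Rle (p n) R1)
  (hq : Un_cv (fun n => Rmult (Rminus R1 (p n)) (Rmult (INR n) (sqrt (INR n)))) R0) :
  exists N : nat, forall n : nat, (N <= n)%N ->
    u_eq 2 n (p n) 3 /\ u'_eq 2 n (p n) 3.
Proof.
have [N dense] := eventually_nearly_complete hp hq.
exists N => n /dense[n3 few_non_edges many_triangles].
have u3 conn : u_value 2 conn n (p n) 3.
  apply: u_value_of_bounds => // [|j j_gt3].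
    exact: Rlt_le_trans many_triangles (gnp_prob_diam_event3_ge (hp n) conn n3).
  by apply: Rle_trans (gnp_prob_diam_event_gt3_le n (hp n) conn j_gt3) _; lra.
by split; apply: u3.
Qed.
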